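(* Let $F$ be a field of characteristic zero and let $A$ be an $F$-algebra isomorphic to a direct sum (not necessarily finite) of finite field extensions of $F$ (for instance, a direct sum of copies of $F$). Then the only Rota–Baxter operator of weight zero on $A$ is the zero operator.
   Context: A linear operator $R$ on $A$ is a Rota–Baxter operator of weight $0$ if $R(x)R(y)=R(R(x)y+xR(y))$ for all $x,y\in A$. *)

From HB Require Import structures.
From mathcomp Require Import all_boot all_order all_algebra all_field.
Set Implicit Arguments. Unset Strict Implicit. Unset Printing Implicit Defensive.
Import GRing.Theory.
Local Open Scope ring_scope.

(* The (external, possibly infinite) direct sum  ⊕_{i : I} L i  of a family of
   finite field extensions L i of F, as an F-algebra (non-unital in general):
   dependent functions with finite support, pointwise operations. *)
(* list membership (Prop-valued, no decidable equality needed on I) *)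
Fixpoint lin {I : Type} (i : I) (s : list I) : Prop :=
  match s with nil => False | cons j s' => j = i \/ lin i s' end.

Lemma lin_app {I : Type} (i : I) (s t : list I) : lin i s \/ lin i t -> lin i (s ++ t).
Proof. elim: s => [|j s IH] /=; first by case. by case=> [[->|H]|H]; auto. Qed.

Section DirectSum.
Variables (F : fieldType) (I : Type) (L : I -> fieldExtType F).

Definition finsupp (x : forall i, L i) : Prop :=
  exists s : list I, forall i, ~ lin i s -> x i = 0.

Record dsum := DSum { dval : forall i, L i; dsupp : finsupp dval }.

Lemma finsupp0 : finsupp (fun i => 0).
Proof. by exists nil. Qed.

Lemma finsuppD (x y : dsum) : finsupp (fun i => dval x i + dval y i).
Proof.
case: x y => [x [s Hs]] [y [t Ht]] /=; exists (s ++ t)%list => i Hi.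
rewrite Hs ?Ht ?addr0 // => H; apply: Hi; apply lin_app; auto.
Qed.

Lemma finsuppM (x y : dsum) : finsupp (fun i => dval x i * dval y i).
Proof.
case: x y => [x [s Hs]] [y [t Ht]] /=; exists s => i Hi.
by rewrite Hs // mul0r.
Qed.

Lemma finsuppZ (a : F) (x : dsum) : finsupp (fun i => a *: dval x i).
Proof.
case: x => [x [s Hs]] /=; exists s => i Hi.
by rewrite Hs // scaler0.
Qed.

Definition dzero : dsum := DSum finsupp0.
Definition dadd (x y : dsum) : dsum := DSum (finsuppD x y).
Definition dmul (x y : dsum) : dsum := DSum (finsuppM x y).
Definition dscale (a : F) (x : dsum) : dsum := DSum (finsuppZ a x).

Definition dlinear (R : dsum -> dsum) : Prop :=
  forall (a : F) (x y : dsum), R (dadd (dscale a x) y) = dadd (dscale a (R x)) (R y).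

Definition rota_baxter0 (R : dsum -> dsum) : Prop :=
  dlinear R /\
  forall x y : dsum, dmul (R x) (R y) = R (dadd (dmul (R x) y) (dmul x (R y))).

End DirectSum.

From HB Require Import structures.
From mathcomp Require Import all_boot all_order all_algebra all_field.
From Stdlib Require Import FunctionalExtensionality ProofIrrelevance Classical_Prop.
Set Implicit Arguments. Unset Strict Implicit.
Local Open Scope ring_scope.
Import GRing.Theory.

(* Let y = R x.  Every component of y is algebraic over F and y has finite
   support, so a single polynomial G = c + X H with c <> 0 satisfies
   y G(y) = 0 componentwise; then e := - c^-1 y H(y) satisfies e y = y and
   e^2 = e.  The image of R is closed under products (R a R b = R (...)),
   hence e = R z for some z.  For an idempotent e = R z and v := e z, the
   Rota-Baxter identity at (z, z) gives R (2 v) = e and at (z, 2 v) gives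
   e = R (3 v), so R v = 0 and e = 0.  Thus y = e y = 0. *)

Lemma algebraic_annihilator (F : fieldType) (K : fieldExtType F) (x : K) :
  exists2 G : {poly F}, G.[0] != 0 & x * (map_poly (in_alg K) G).[x] = 0.
Proof.
have [p p_monic px0] := alg_integral x.
have [m [q]] := multiplicity_XsubC p 0; rewrite monic_neq0 //= => q0 Dp.
exists q; first by move: q0; rewrite rootE.
have [->|x_neq0] := eqVneq x 0; first by rewrite mul0r.
move: px0; rewrite Dp rmorphM rmorphXn rmorphB /= map_polyX map_polyC /=.
rewrite rootE hornerM horner_exp !hornerE scale0r subr0 mulf_eq0 expf_eq0.
by rewrite (negbTE x_neq0) andbF orbF => /eqP->; rewrite mulr0.
Qed.

Lemma annihilator_quasi_inverse (F : fieldType) (A : comAlgType F)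
    (H : {poly F}) (c : F) (x : A) :
  c != 0 -> x * (map_poly (in_alg A) (H * 'X + c%:P)).[x] = 0 ->
  x * (map_poly (in_alg A) ((- c^-1)%:P * H)).[x] * x = x.
Proof.
move=> c_neq0; rewrite rmorphD rmorphM /= map_polyX map_polyC /= !hornerE.
rewrite rmorphM /= map_polyC /= hornerCM mulrDr => /eqP; rewrite addr_eq0 => /eqP.
move=> Hx; rewrite mulrCA -mulrA -[x * _ * x]mulrA Hx.
by rewrite mulrN mulr_algl mulr_algr scalerA mulNr mulVf // scaleN1r opprK.
Qed.

Section DirectSum.
Variables (F : fieldType) (I : Type) (L : I -> fieldExtType F).

Lemma dsum_ext (x y : dsum L) : (forall i, dval x i = dval y i) -> x = y.
Proof.
case: x y => [x hx] [y hy] /= Exy.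
have {}Exy : x = y by apply: functional_extensionality_dep.
by subst y; rewrite (proof_irrelevance _ hx hy).
Qed.

(* [y P(y)] by Horner's rule; [dsum L] carries no ring structure, so there is
   no library polynomial evaluation to reuse. *)
Definition dXhorner (P : {poly F}) (y : dsum L) : dsum L :=
  foldr (fun c acc => dadd (dscale c y) (dmul y acc)) (dzero L) P.

Lemma dval_dXhorner P y i :
  dval (dXhorner P y) i = dval y i * (map_poly (in_alg (L i)) P).[dval y i].
Proof.
rewrite /dXhorner -[in RHS](polyseqK P); elim: (polyseq P) => [|c cs IH] /=.
  by rewrite rmorph0 horner0 mulr0.
rewrite IH cons_poly_def rmorphD rmorphM /= map_polyX map_polyC /= !hornerE.
by rewrite mulrDr mulr_algr addrC [_ * dval y i]mulrC mulrA.
Qed.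

Lemma dsum_annihilator (y : dsum L) :
  exists2 G : {poly F}, G.[0] != 0 &
    forall i, dval y i * (map_poly (in_alg (L i)) G).[dval y i] = 0.
Proof.
have [s y_supp] := dsupp y.
suff [G G0 HG] : exists2 G : {poly F}, G.[0] != 0 &
    forall i, lin i s -> dval y i * (map_poly (in_alg (L i)) G).[dval y i] = 0.
  exists G => // i; have [/HG //|/y_supp->] := classic (lin i s).
  by rewrite mul0r.
elim: s {y_supp} => [|j s [G G0 HG]]; first by exists 1; rewrite ?hornerC ?oner_eq0.
have [r r0 Hr] := algebraic_annihilator (dval y j).
exists (r * G) => [|i [<-|Hi]]; first by rewrite hornerM mulf_neq0.
  by rewrite rmorphM hornerM mulrA Hr mul0r.
by rewrite rmorphM hornerM mulrCA HG // mulr0.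
Qed.

Lemma dsum_quasi_inverse (y : dsum L) :
  exists P : {poly F}, forall i,
    dval y i * (map_poly (in_alg (L i)) P).[dval y i] * dval y i = dval y i.
Proof.
have [G G0 HG] := dsum_annihilator y.
have /factor_theorem [H DH] : root (G - (G.[0])%:P) 0.
  by rewrite rootE !hornerE subrr.
exists ((- (G.[0])^-1)%:P * H) => i; apply: annihilator_quasi_inverse => //.
by move: DH; rewrite polyC0 subr0 => <-; rewrite subrK; apply: HG.
Qed.

Section RotaBaxter.
Variable R : dsum L -> dsum L.
Hypothesis hR : rota_baxter0 R.

Lemma rb_add a b : R (dadd a b) = dadd (R a) (R b).
Proof.
have scale1 (x : dsum L) : dscale 1 x = x by apply: dsum_ext => j /=; rewrite scale1r.
by have := (proj1 hR) 1 a b; rewrite !scale1.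
Qed.

Lemma rb0 : R (dzero L) = dzero L.
Proof.
have add00 : dadd (dzero L) (dzero L) = dzero L.
  by apply: dsum_ext => j /=; rewrite addr0.
apply: dsum_ext => j; have := congr1 (fun f => dval f j) (rb_add (dzero L) (dzero L)).
by rewrite add00 /= => E; apply/(addrI (dval (R (dzero L)) j)); rewrite addr0 -E.
Qed.

Lemma rb_scale c a : R (dscale c a) = dscale c (R a).
Proof.
have add0 (x : dsum L) : dadd x (dzero L) = x by apply: dsum_ext => j /=; rewrite addr0.
by have := (proj1 hR) c a (dzero L); rewrite rb0 !add0.
Qed.

Lemma rb_image_dXhorner P w : exists u, R u = dXhorner P (R w).
Proof.
rewrite /dXhorner; elim: (polyseq P) => [|c cs [u Ru]] /=.
  by exists (dzero L); rewrite rb0.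
exists (dadd (dscale c w) (dadd (dmul (R w) u) (dmul w (R u)))).
by rewrite rb_add rb_scale -(proj2 hR) Ru.
Qed.

Lemma rb_idempotent_eq0 z :
  (forall i, dval (R z) i * dval (R z) i = dval (R z) i) -> R z = dzero L.
Proof.
set e := R z => e_idem; pose v := dmul e z.
have R2v : R (dadd v v) = e.
  have := (proj2 hR) z z; rewrite -/e.
  have -> : dadd (dmul e z) (dmul z e) = dadd v v.
    by apply: dsum_ext => j /=; rewrite mulrC.
  by move=> <-; apply: dsum_ext => j /=; rewrite e_idem.
have R3v : e = dadd e (R v).
  rewrite -{2}R2v -rb_add; have := (proj2 hR) z (dadd v v); rewrite R2v.
  have -> : dmul e e = e by apply: dsum_ext => j /=; rewrite e_idem.
  move=> ->; congr R; apply: dsum_ext => j /=.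
  by rewrite mulrDr mulrA e_idem [dval z j * _]mulrC.
have Rv0 j : dval (R v) j = 0.
  have /= E := congr1 (fun f => dval f j) R3v.
  by apply/(addrI (dval e j)); rewrite addr0 -E.
by apply: dsum_ext => j; rewrite -R2v rb_add /= Rv0 addr0.
Qed.

End RotaBaxter.
End DirectSum.

Theorem corollary8 (F : fieldType) (I : Type) (L : I -> fieldExtType F)
  (charF0 : [pchar F] =i pred0)
  (R : dsum L -> dsum L) (hR : rota_baxter0 R) :
  forall x : dsum L, R x = dzero L.
Proof.
move=> x; set y := R x.
have [P yPy] := dsum_quasi_inverse y.
pose e := dXhorner P y.
have ey i : dval e i * dval y i = dval y i by rewrite dval_dXhorner yPy.
have e_idem i : dval e i * dval e i = dval e i.
  by rewrite {1}dval_dXhorner mulrAC [dval y i * _]mulrC ey dval_dXhorner.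
have [z Rz] : exists z, R z = e := rb_image_dXhorner hR P x.
have e0 : e = dzero L.
  by rewrite -Rz; apply: (rb_idempotent_eq0 hR); rewrite Rz; exact: e_idem.
by apply: dsum_ext => i; rewrite -ey e0 /= mul0r.
Qed.
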